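(* Let $(B,\cdot)$ and $(C,\diamond)$ be invariant sets (possibly equal), let $B_1$ be a finitely supported subset of $B$ and $C_1$ a finitely supported subset of $C$. If there exist a finitely supported injective map $f:B_1\to C_1$ and a finitely supported injective map $g:C_1\to B_1$, then there exists a finitely supported bijection $h:B_1\to C_1$, and moreover $supp(h)\subseteq supp(f)\cup supp(g)\cup supp(B_1)\cup supp(C_1)$.
   Context: Framework (FSM). Work in ZF with a fixed infinite set $A$ whose elements are called atoms. $S_A$ is the group of all bijections $\pi:A\to A$ fixing all but finitely many atoms. An $S_A$-set is a set with a group action of $S_A$. For $S\subseteq A$, $Fix(S)=\{\pi\in S_A:\pi(a)=a\ \forall a\in S\}$; $S$ supports $x$ if $\pi\cdot x=x$ for all $\pi\in Fix(S)$. An invariant set is an $S_A$-set in which every element is supported by some finite set; $supp(x)$ denotes the least finite set supporting $x$; $x$ is equivariant if $supp(x)=\emptyset$. The powerset carries the action $\pi\star Z=\{\pi\cdot z:z\in Z\}$; a subset is finitely supported if it has a finite support under this action. Products carry $\pi\cdot(x,y)=(\pi\cdot x,\pi\cdot y)$. A function $f:X\to Y$ between finitely supported subsets of invariant sets is finitely supported if its graph is a finitely supported subset of the product; equivalently, there is a finite $S\subseteq A$ such that for all $\pi\in Fix(S)$ and $x\in X$: $\pi\cdot x\in X$, $\pi\cdot f(x)\in Y$ and $f(\pi\cdot x)=\pi\cdot f(x)$; $supp(f)$ is the least such $S$. *)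

From Stdlib Require Import List.
Import ListNotations.
Set Implicit Arguments.


Record fperm (A : Type) := FPerm {
  pf : A -> A;
  pinv : A -> A;
  pf_pinv : forall a, pf (pinv a) = a;
  pinv_pf : forall a, pinv (pf a) = a;
  pdom : list A;
  pdom_spec : forall a, pf a <> a -> In a pdom
}.

Definition fixes (A : Type) (pi : fperm A) (S : list A) : Prop :=
  forall a, In a S -> pf pi a = a.

Definition supports (A X : Type) (act : fperm A -> X -> X) (S : list A) (x : X)
  : Prop := forall pi, fixes pi S -> act pi x = x.

(* Invariant sets: S_A-sets (group actions, identified through the
   underlying permutation function) whose elements are all finitely supported. *)
Record invset (A : Type) := InvSet {
  carrier :> Type;
  act : fperm A -> carrier -> carrier;
  act_id : forall pi x, (forall a, pf pi a = a) -> act pi x = x;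
  act_comp : forall pi sigma rho x,
      (forall a, pf rho a = pf pi (pf sigma a)) ->
      act rho x = act pi (act sigma x);
  act_fs : forall x : carrier, exists S : list A, supports act S x
}.

Definition set_supports (A : Type) (X : invset A) (S : list A) (Z : X -> Prop)
  : Prop :=
  forall pi, fixes pi S ->
    forall y, Z y <-> exists z, Z z /\ act X pi z = y.

Definition fun_supports (A : Type) (X Y : invset A) (X1 : X -> Prop)
  (Y1 : Y -> Prop) (S : list A) (f : X -> Y) : Prop :=
  forall pi, fixes pi S -> forall x, X1 x ->
    X1 (act X pi x) /\ Y1 (act Y pi (f x)) /\ f (act X pi x) = act Y pi (f x).

Definition least_supp (A : Type) (P : list A -> Prop) (S : list A) : Prop :=
  P S /\ forall T, P T -> incl S T.
Arguments set_supports {A X} S Z.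
Arguments fun_supports {A X Y} X1 Y1 S f.

(* The bijection is the classical one.  Call x in B1 a "chain point" when x
   lies on the (g o f)-orbit of some x0 in B1 that is not in the range of g;
   then h x = f x on chain points and h x = g^-1 x elsewhere.  This h is a
   bijection B1 -> C1 by the usual argument, and every finite set S
   supporting both f and g also supports h, because the permutations fixing
   S commute with f, g, the iterates of g o f, and hence preserve both the
   range of g and the set of chain points.  So S_f ++ S_g supports h.

   For the bound on the least support we show, in general, that a property
   of permutations that is stable under composition and supported by some
   finite set has a least finite support, contained in any given support.
   The key step removes an atom a not in some support T: conjugating by the
   transposition (a b), with b fresh, trades a for b.  This needs A to be
   infinite.  Applied to h with the support S_f ++ S_g, it gives the bound. *)

From Stdlib Require Import List Classical ClassicalEpsilon.
Import ListNotations.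
Set Implicit Arguments.

Definition dec (P : Prop) : {P} + {~ P} := excluded_middle_informative P.

Section Permutations.
Variable A : Type.

Definition swapf (a b c : A) : A :=
  if dec (c = a) then b else if dec (c = b) then a else c.

Lemma swapf_l a b : swapf a b a = b.
Proof. unfold swapf. destruct (dec (a = a)); congruence. Qed.

Lemma swapf_r a b : swapf a b b = a.
Proof.
  unfold swapf. destruct (dec (b = a)); [congruence|].
  destruct (dec (b = b)); congruence.
Qed.

Lemma swapf_other a b c : c <> a -> c <> b -> swapf a b c = c.
Proof.
  intros. unfold swapf.
  destruct (dec (c = a)); [congruence|]. destruct (dec (c = b)); congruence.
Qed.

Lemma swapf_invol a b c : swapf a b (swapf a b c) = c.
Proof.
  destruct (dec (c = a)) as [->|Ha]; [now rewrite swapf_l, swapf_r|].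
  destruct (dec (c = b)) as [->|Hb]; [now rewrite swapf_r, swapf_l|].
  rewrite (swapf_other Ha Hb). now apply swapf_other.
Qed.

Lemma swapf_moved a b c : swapf a b c <> c -> In c [a; b].
Proof.
  intros H. destruct (dec (c = a)) as [->|Ha]; [now left|].
  destruct (dec (c = b)) as [->|Hb]; [now right; left|].
  now rewrite swapf_other in H.
Qed.

Definition swap (a b : A) : fperm A :=
  FPerm (swapf a b) (swapf a b) (swapf_invol a b) (swapf_invol a b) [a; b]
    (swapf_moved a b).

Lemma fcomp_moved (p q : fperm A) c :
  pf p (pf q c) <> c -> In c (pdom p ++ pdom q).
Proof.
  intros H. apply in_or_app. destruct (dec (pf q c = c)) as [E|E].
  - left. apply pdom_spec. now rewrite E in H.
  - right. now apply pdom_spec.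
Qed.

Lemma fcomp_right_inv (p q : fperm A) c : pf p (pf q (pinv q (pinv p c))) = c.
Proof. now rewrite !pf_pinv. Qed.

Lemma fcomp_left_inv (p q : fperm A) c : pinv q (pinv p (pf p (pf q c))) = c.
Proof. now rewrite !pinv_pf. Qed.

Definition fcomp (p q : fperm A) : fperm A :=
  FPerm (fun c => pf p (pf q c)) (fun c => pinv q (pinv p c))
    (fcomp_right_inv p q) (fcomp_left_inv p q) (pdom p ++ pdom q) (fcomp_moved p q).

Lemma finv_moved (p : fperm A) c : pinv p c <> c -> In c (pdom p).
Proof.
  intros H. apply pdom_spec. intros E. apply H.
  rewrite <- E at 1. apply pinv_pf.
Qed.

Definition finv (p : fperm A) : fperm A :=
  FPerm (pinv p) (pf p) (pinv_pf p) (pf_pinv p) (pdom p) (finv_moved p).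

Lemma fid_moved c : (fun x : A => x) c <> c -> In c [].
Proof. intros H. now exfalso. Qed.

Definition fid : fperm A :=
  FPerm (fun x => x) (fun x => x) (fun _ => eq_refl) (fun _ => eq_refl) [] fid_moved.

Lemma finv_fixes (p : fperm A) S : fixes p S -> fixes (finv p) S.
Proof. intros H s Hs. simpl. rewrite <- (H s Hs) at 1. apply pinv_pf. Qed.

Lemma act_ext (X : invset A) (p q : fperm A) x :
  (forall c, pf p c = pf q c) -> act X p x = act X q x.
Proof.
  intros E. rewrite (act_comp X q fid p x) by (intros; apply E).
  now rewrite (act_id X fid x).
Qed.

Lemma act_fcomp (X : invset A) (p q : fperm A) x :
  act X (fcomp p q) x = act X p (act X q x).
Proof. now apply act_comp. Qed.

Lemma act_finv (X : invset A) (p : fperm A) x : act X (finv p) (act X p x) = x.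
Proof.
  rewrite <- (act_comp X (finv p) p fid x) by (intros; symmetry; apply pinv_pf).
  now apply act_id.
Qed.

End Permutations.

Section LeastSupport.
Variable A : Type.
Hypothesis A_infinite : forall l : list A, exists a, ~ In a l.

(* A property of permutations, such as "commutes with a given function",
   closed under composition and depending only on the underlying function. *)
Variable P : fperm A -> Prop.
Hypothesis P_fcomp : forall p q, P p -> P q -> P (fcomp p q).
Hypothesis P_ext : forall p q, (forall c, pf p c = pf q c) -> P p -> P q.

Definition supported (S : list A) : Prop := forall pi, fixes pi S -> P pi.

Lemma supported_mono S T : incl S T -> supported S -> supported T.
Proof. intros I H pi Hpi. apply H. intros a Ha. now apply Hpi, I. Qed.

(* An atom a outside some support T can be dropped from any support S:
   a permutation pi fixing S' is (a b) o ((a b) pi (a b)) o (a b) with b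
   fresh, where (a b) fixes T and (a b) pi (a b) fixes S. *)
Lemma supported_drop S T S' a :
  supported S -> supported T -> ~ In a T -> incl S (a :: S') -> supported S'.
Proof.
  intros HS HT HaT Hincl pi Hpi.
  destruct (A_infinite (S ++ T ++ pdom pi)) as [b Hb].
  rewrite !in_app_iff in Hb.
  assert (pi_b : pf pi b = b).
  { destruct (dec (pf pi b = b)) as [E|E]; [exact E|].
    exfalso. apply Hb. right. right. now apply pdom_spec. }
  assert (swap_ok : P (swap a b)).
  { apply HT. intros c Hc. simpl. apply swapf_other; intros ->; tauto. }
  assert (conj_ok : P (fcomp (swap a b) (fcomp pi (swap a b)))).
  { apply HS. intros c Hc. simpl.
    destruct (dec (c = a)) as [->|Hca].
    - now rewrite swapf_l, pi_b, swapf_r.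
    - assert (Hcb : c <> b) by (intros ->; tauto).
      destruct (Hincl c Hc) as [E|E]; [congruence|].
      rewrite (swapf_other Hca Hcb), (Hpi c E). now apply swapf_other. }
  apply P_ext with
    (fcomp (swap a b) (fcomp (fcomp (swap a b) (fcomp pi (swap a b))) (swap a b))).
  - intros c. simpl. now rewrite !swapf_invol.
  - auto.
Qed.

Definition essential (a : A) : Prop := forall T, supported T -> In a T.

Definition essentialb (a : A) : bool := if dec (essential a) then true else false.

Lemma supported_filter L : forall K,
  supported (K ++ L) -> supported (K ++ filter essentialb L).
Proof.
  induction L as [|a L IH]; intros K H; simpl; [exact H|].
  unfold essentialb at 1. destruct (dec (essential a)) as [Ea|nEa].
  - replace (K ++ a :: filter essentialb L) with ((K ++ [a]) ++ filter essentialb L)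
      by now rewrite <- app_assoc.
    apply IH. now rewrite <- app_assoc.
  - apply IH. apply not_all_ex_not in nEa as [T HT].
    apply imply_to_and in HT as [HT HaT].
    apply (supported_drop (S := K ++ a :: L) H HT HaT).
    intros c Hc. rewrite in_app_iff in Hc. simpl in *. rewrite in_app_iff. tauto.
Qed.

Lemma least_support_exists S0 :
  supported S0 -> exists S, least_supp supported S /\ incl S S0.
Proof.
  intros H. exists (filter essentialb S0). split; [split|].
  - exact (supported_filter S0 [] H).
  - intros T HT a Ha. apply filter_In in Ha as [_ Ha].
    unfold essentialb in Ha. destruct (dec (essential a)) as [E|]; [|discriminate].
    now apply E.
  - intros a Ha. now apply filter_In in Ha.
Qed.

End LeastSupport.

(* The permutations commuting with a map k : X1 -> Y1; fun_supports is the
   instance of supported for this property. *)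
Definition commutes_with (A : Type) (X Y : invset A) (X1 : X -> Prop)
  (Y1 : Y -> Prop) (k : X -> Y) (pi : fperm A) : Prop :=
  forall x, X1 x -> X1 (act X pi x) /\ Y1 (act Y pi (k x)) /\ k (act X pi x) = act Y pi (k x).
Arguments commutes_with {A X Y} X1 Y1 k pi.

Lemma commutes_with_fcomp (A : Type) (X Y : invset A) (X1 : X -> Prop) (Y1 : Y -> Prop) (k : X -> Y) (p q : fperm A) :
  commutes_with X1 Y1 k p -> commutes_with X1 Y1 k q -> commutes_with X1 Y1 k (fcomp p q).
Proof.
  intros Hp Hq x Hx. rewrite !act_fcomp.
  destruct (Hq x Hx) as [Hqx [_ Eq]]. destruct (Hp _ Hqx) as [Hpqx [HY Ep]].
  rewrite Eq in HY, Ep. auto.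
Qed.

Lemma commutes_with_ext (A : Type) (X Y : invset A) (X1 : X -> Prop) (Y1 : Y -> Prop) (k : X -> Y) (p q : fperm A) :
  (forall c, pf p c = pf q c) -> commutes_with X1 Y1 k p -> commutes_with X1 Y1 k q.
Proof. intros E Hp x Hx. rewrite <- !(act_ext _ p q) by exact E. auto. Qed.

Section SchroederBernstein.
Variable A : Type.
Variables (B C : invset A) (B1 : B -> Prop) (C1 : C -> Prop).
Variables (f : B -> C) (g : C -> B).
Hypothesis f_maps : forall x, B1 x -> C1 (f x).
Hypothesis f_inj : forall x y, B1 x -> B1 y -> f x = f y -> x = y.
Hypothesis g_maps : forall y, C1 y -> B1 (g y).
Hypothesis g_inj : forall x y, C1 x -> C1 y -> g x = g y -> x = y.

Fixpoint iter_gf (n : nat) (x : B) : B :=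
  match n with 0 => x | S n => g (f (iter_gf n x)) end.

Definition in_g_range (x : B) : Prop := exists y, C1 y /\ g y = x.

Definition chain (x : B) : Prop :=
  exists n x0, B1 x0 /\ ~ in_g_range x0 /\ x = iter_gf n x0.

Definition sb_map (x : B) : C :=
  if dec (chain x) then f x else epsilon (inhabits (f x)) (fun y => C1 y /\ g y = x).

Lemma iter_gf_B1 n x : B1 x -> B1 (iter_gf n x).
Proof. induction n; simpl; auto. Qed.

Lemma chain_step x : chain x -> chain (g (f x)).
Proof. intros (n & x0 & H0 & Hr & ->). now exists (S n), x0. Qed.

Lemma not_chain_in_g_range x : B1 x -> ~ chain x -> in_g_range x.
Proof.
  intros Hx H. apply NNPP. intros Hr. apply H. now exists 0, x.
Qed.

Lemma chain_g_pred y : C1 y -> chain (g y) -> exists x, B1 x /\ chain x /\ f x = y.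
Proof.
  intros Hy (n & x0 & H0 & Hr & E). destruct n as [|m].
  - exfalso. apply Hr. exists y. auto.
  - exists (iter_gf m x0). pose proof (iter_gf_B1 m H0).
    split; [assumption|]. split; [now exists m, x0|].
    symmetry. apply g_inj; auto.
Qed.

Lemma sb_map_chain x : chain x -> sb_map x = f x.
Proof. intros H. unfold sb_map. now destruct (dec (chain x)). Qed.

Lemma sb_map_not_chain x y : ~ chain x -> C1 y -> g y = x -> sb_map x = y.
Proof.
  intros H Hy Hg. unfold sb_map. destruct (dec (chain x)); [contradiction|].
  destruct (epsilon_spec (inhabits (f x)) (fun y => C1 y /\ g y = x)) as [Hy' Hg'].
  - now exists y.
  - apply g_inj; congruence.
Qed.

Lemma sb_map_maps x : B1 x -> C1 (sb_map x).
Proof.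
  intros Hx. destruct (classic (chain x)) as [X|X].
  - rewrite sb_map_chain; auto.
  - destruct (not_chain_in_g_range Hx X) as (y & Hy & Hg).
    now rewrite (sb_map_not_chain X Hy Hg).
Qed.

Lemma sb_map_separates u v :
  B1 v -> chain u -> ~ chain v -> sb_map u <> sb_map v.
Proof.
  intros Hv Xu Xv E. destruct (not_chain_in_g_range Hv Xv) as (w & Hw & Hg).
  rewrite sb_map_chain, (sb_map_not_chain Xv Hw Hg) in E by exact Xu.
  apply Xv. rewrite <- Hg, <- E. now apply chain_step.
Qed.

Lemma sb_map_inj x y : B1 x -> B1 y -> sb_map x = sb_map y -> x = y.
Proof.
  intros Hx Hy E.
  destruct (classic (chain x)) as [X|X]; destruct (classic (chain y)) as [Y|Y].
  - rewrite !sb_map_chain in E by assumption. auto.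
  - exfalso. exact (sb_map_separates Hy X Y E).
  - exfalso. exact (sb_map_separates Hx Y X (eq_sym E)).
  - destruct (not_chain_in_g_range Hx X) as (u & Hu & <-).
    destruct (not_chain_in_g_range Hy Y) as (v & Hv & <-).
    rewrite (sb_map_not_chain X Hu eq_refl), (sb_map_not_chain Y Hv eq_refl) in E.
    now subst.
Qed.

Lemma sb_map_surj y : C1 y -> exists x, B1 x /\ sb_map x = y.
Proof.
  intros Hy. destruct (classic (chain (g y))) as [X|X].
  - destruct (chain_g_pred Hy X) as (x & Hx & Xx & <-).
    exists x. split; [exact Hx|]. now apply sb_map_chain.
  - exists (g y). split; auto. now apply sb_map_not_chain.
Qed.

Section Equivariance.
Variable S : list A.
Hypothesis f_supp : fun_supports B1 C1 S f.
Hypothesis g_supp : fun_supports C1 B1 S g.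

Lemma iter_gf_act pi n x :
  fixes pi S -> B1 x -> iter_gf n (act B pi x) = act B pi (iter_gf n x).
Proof.
  intros Hpi Hx. induction n as [|n IH]; simpl; [reflexivity|].
  rewrite IH. pose proof (iter_gf_B1 n Hx) as Hn.
  destruct (f_supp Hpi Hn) as (_ & _ & ->).
  now destruct (g_supp Hpi (f_maps Hn)) as (_ & _ & ->).
Qed.

Lemma in_g_range_act_inv pi x :
  fixes pi S -> in_g_range (act B pi x) -> in_g_range x.
Proof.
  intros Hpi (y & Hy & Hg).
  destruct (g_supp (finv_fixes Hpi) Hy) as (HCy & _ & E).
  exists (act C (finv pi) y). split; [exact HCy|].
  now rewrite E, Hg, act_finv.
Qed.

Lemma chain_act pi x : fixes pi S -> chain x -> chain (act B pi x).
Proof.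
  intros Hpi (n & x0 & H0 & Hr & ->).
  exists n, (act B pi x0). split; [|split].
  - now destruct (f_supp Hpi H0).
  - intros Hr'. exact (Hr (@in_g_range_act_inv pi x0 Hpi Hr')).
  - symmetry. now apply iter_gf_act.
Qed.

Lemma sb_map_supported : fun_supports B1 C1 S sb_map.
Proof.
  intros pi Hpi x Hx.
  destruct (f_supp Hpi Hx) as (HBx & HCfx & Ef). split; [exact HBx|].
  destruct (classic (chain x)) as [X|X].
  - rewrite !sb_map_chain by auto using chain_act. auto.
  - destruct (not_chain_in_g_range Hx X) as (y & Hy & Hg).
    rewrite (sb_map_not_chain X Hy Hg).
    destruct (g_supp Hpi Hy) as (HCy & _ & Eg). split; [exact HCy|].
    apply sb_map_not_chain; [|exact HCy|congruence].
    intros Y. apply X. rewrite <- (act_finv B pi x).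
    exact (chain_act (finv_fixes Hpi) Y).
Qed.

End Equivariance.
End SchroederBernstein.

Theorem mainTheorem1
  (A : Type) (A_infinite : forall l : list A, exists a, ~ In a l)
  (B C : invset A) (B1 : B -> Prop) (C1 : C -> Prop)
  (HB1 : exists S, set_supports S B1) (HC1 : exists S, set_supports S C1)
  (f : B -> C) (g : C -> B)
  (f_maps : forall x, B1 x -> C1 (f x))
  (f_inj : forall x y, B1 x -> B1 y -> f x = f y -> x = y)
  (f_fs : exists S, fun_supports B1 C1 S f)
  (g_maps : forall y, C1 y -> B1 (g y))
  (g_inj : forall x y, C1 x -> C1 y -> g x = g y -> x = y)
  (g_fs : exists S, fun_supports C1 B1 S g) :
  exists h : B -> C,
    (forall x, B1 x -> C1 (h x)) /\
    (forall x y, B1 x -> B1 y -> h x = h y -> x = y) /\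
    (forall y, C1 y -> exists x, B1 x /\ h x = y) /\
    (exists S, fun_supports B1 C1 S h) /\
    (forall Sf Sg SB SC,
       least_supp (fun S => fun_supports B1 C1 S f) Sf ->
       least_supp (fun S => fun_supports C1 B1 S g) Sg ->
       least_supp (fun S => set_supports S B1) SB ->
       least_supp (fun S => set_supports S C1) SC ->
       exists Sh, least_supp (fun S => fun_supports B1 C1 S h) Sh /\
                  incl Sh (Sf ++ Sg ++ SB ++ SC)).
Proof.
  set (h := sb_map B C B1 C1 f g).
  assert (h_supp : forall Sf Sg, fun_supports B1 C1 Sf f -> fun_supports C1 B1 Sg g ->
                     fun_supports B1 C1 (Sf ++ Sg) h).
  { intros Sf Sg Hf Hg. apply sb_map_supported; auto.
    - apply (supported_mono (P := commutes_with B1 C1 f) (S := Sf)); auto using incl_appl, incl_refl.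
    - apply (supported_mono (P := commutes_with C1 B1 g) (S := Sg)); auto using incl_appr, incl_refl. }
  exists h. split; [|split; [|split; [|split]]].
  - apply sb_map_maps; auto.
  - apply sb_map_inj; auto.
  - apply sb_map_surj; auto.
  - destruct f_fs as [Sf Hf], g_fs as [Sg Hg]. exists (Sf ++ Sg). auto.
  - intros Sf Sg SB SC [Hf _] [Hg _] _ _.
    destruct (least_support_exists A_infinite (@commutes_with_fcomp A B C B1 C1 h)
                (@commutes_with_ext A B C B1 C1 h) (h_supp Sf Sg Hf Hg)) as (Sh & Hleast & Hincl).
    exists Sh. split; [exact Hleast|].
    intros a Ha. specialize (Hincl a Ha). rewrite !in_app_iff in *. tauto.
Qed.
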